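(* Let $u$ be a countable transitive model of $\mathsf{ZF}$ minus Power Set, let $\mathbb P\in u$ be a partial order with ordering $\le^{\mathbb P}$ and least element $0^{\mathbb P}$, and let $I$ be a non-empty ideal on $\mathbb P$. Let $\mathcal M$ be the development model defined below and let $\tilde\in^{\mathcal M}=\{(\sigma,\tau)\in u^{\mathbb P}\times u^{\mathbb P}:\mathcal M\models\Diamond\Box\,\sigma\in^*\tau\}$. Then $\tilde\in^{\mathcal M}$ is well-founded on $u^{\mathbb P}$, and the Mostowski collapse $\mathrm{mos}$ of $\langle u^{\mathbb P},\tilde\in^{\mathcal M}\rangle$, defined by $\tilde\in^{\mathcal M}$-recursion as $\mathrm{mos}(\tau)=\{\mathrm{mos}(\sigma):\sigma\mathrel{\tilde\in}^{\mathcal M}\tau\}$, satisfies $\mathrm{mos}(\tau)=\mathrm{val}_I(\tau)$ for all $\tau\in u^{\mathbb P}$; consequently the collapsed structure $\langle\{\mathrm{mos}(\tau):\tau\in u^{\mathbb P}\},\in\rangle$ equals the forcing extension $u[I]$.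
   Context: A $\mathbb P$-name is (by $\in$-recursion) a set of ordered pairs $\langle\sigma,p\rangle$ with $\sigma$ a $\mathbb P$-name and $p\in\mathbb P$; $u^{\mathbb P}$ is the set of $\mathbb P$-names belonging to $u$. An ideal on $\mathbb P$ is a set $I\subseteq\mathbb P$ that is downward closed ($q\le^{\mathbb P}p\in I\Rightarrow q\in I$) and directed (any two elements of $I$ have a common upper bound in $I$). (This is the reverse of the usual forcing convention: $I$ plays the role of a filter.) By $\in$-recursion, $\mathrm{val}_I(\tau)=\{\mathrm{val}_I(\sigma):\exists q\in I\,\langle\sigma,q\rangle\in\tau\}$, and $u[I]=\langle\{\mathrm{val}_I(\sigma):\sigma\in u^{\mathbb P}\},\in\rangle$. The development model $\mathcal M$: states are the elements of $I$, the accessibility relation is $\le^{\mathbb P}$ restricted to $I$; at every state $s$ the structure has domain $u^{\mathbb P}$ with the (static) relation $\in$, and a dynamic binary relation $\in^*$ interpreted at $s$ by: $x\in^* y$ iff $x,y\in u^{\mathbb P}$ and there is $s'\le^{\mathbb P}s$ with $\langle x,s'\rangle\in y$. Modal semantics: $\Diamond\psi$ holds at $s$ iff $\psi$ holds at some state $t\ge s$, $\Box$ dually, and $\mathcal M\models\psi$ means $\psi$ holds at every state. *)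

(* Set theory is represented by an abstract ambient universe (V, mem) which is
   assumed to satisfy the (relevant) axioms of ZF; the countable transitive
   model u is an element of V, and "u |= ZF - Power Set" is expressed through
   a first-order satisfaction relation for the language {∈, =}. *)

Set Implicit Arguments.

Section SetTheory.

Variable V : Type.
Variable mem : V -> V -> Prop.

Record ZF_universe : Prop := {
  zf_ext : forall x y, (forall z, mem z x <-> mem z y) -> x = y;
  zf_found : well_founded mem;
  zf_empty : exists e, forall z, ~ mem z e;
  zf_pair : forall a b, exists c, forall z, mem z c <-> (z = a \/ z = b);
  zf_union : forall a, exists c, forall z, mem z c <-> exists y, mem y a /\ mem z y;
  zf_power : forall a, exists c, forall z,
      mem z c <-> (forall w, mem w z -> mem w a);
  zf_infinity : exists a, (exists e, mem e a /\ forall y, ~ mem y e) /\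
      forall x, mem x a -> exists y, mem y a /\
        forall z, mem z y <-> (mem z x \/ z = x);
  zf_sep : forall (A : V -> Prop) a, exists b, forall z, mem z b <-> (mem z a /\ A z);
  zf_repl : forall (R : V -> V -> Prop) a,
      (forall x y y', mem x a -> R x y -> R x y' -> y = y') ->
      exists b, forall y, mem y b <-> exists x, mem x a /\ R x y
}.

Inductive form : Type :=
  | fMem : nat -> nat -> form
  | fEq  : nat -> nat -> form
  | fFalse : form
  | fNeg : form -> form
  | fAnd : form -> form -> form
  | fOr  : form -> form -> form
  | fImp : form -> form -> form
  | fAll : form -> form
  | fEx  : form -> form.

Definition scons (x : V) (env : nat -> V) : nat -> V :=
  fun n => match n with 0 => x | S k => env k end.

Fixpoint sat (u : V) (env : nat -> V) (phi : form) : Prop :=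
  match phi with
  | fMem i j => mem (env i) (env j)
  | fEq i j => env i = env j
  | fFalse => False
  | fNeg p => ~ sat u env p
  | fAnd p q => sat u env p /\ sat u env q
  | fOr p q => sat u env p \/ sat u env q
  | fImp p q => sat u env p -> sat u env q
  | fAll p => forall x, mem x u -> sat u (scons x env) p
  | fEx p => exists x, mem x u /\ sat u (scons x env) p
  end.

Definition env_in (u : V) (env : nat -> V) : Prop := forall i, mem (env i) u.

Definition ZFminus_model (u : V) : Prop :=
  (forall a b, mem a u -> mem b u ->
     (forall x, mem x u -> (mem x a <-> mem x b)) -> a = b) /\
  (forall a, mem a u -> (exists x, mem x u /\ mem x a) ->
     exists x, mem x u /\ mem x a /\ ~ (exists y, mem y u /\ mem y x /\ mem y a)) /\
  (forall a b, mem a u -> mem b u -> exists c, mem c u /\ mem a c /\ mem b c) /\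
  (forall a, mem a u -> exists c, mem c u /\
     forall x y, mem x u -> mem y u -> mem x a -> mem y x -> mem y c) /\
  (exists a, mem a u /\
     (exists e, mem e u /\ mem e a /\ forall y, mem y u -> ~ mem y e) /\
     (forall x, mem x u -> mem x a -> exists y, mem y u /\ mem y a /\
        forall z, mem z u -> (mem z y <-> (mem z x \/ z = x)))) /\
  (forall (phi : form) env, env_in u env -> forall a, mem a u ->
     exists b, mem b u /\ forall x, mem x u ->
       (mem x b <-> (mem x a /\ sat u (scons x env) phi))) /\
  (forall (phi : form) env, env_in u env -> forall a, mem a u ->
     (forall x, mem x u -> mem x a ->
        (exists y, mem y u /\ sat u (scons y (scons x env)) phi) /\
        (forall y y', mem y u -> mem y' u ->
           sat u (scons y (scons x env)) phi ->
           sat u (scons y' (scons x env)) phi -> y = y')) ->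
     exists b, mem b u /\ forall x, mem x u -> mem x a ->
       exists y, mem y u /\ mem y b /\ sat u (scons y (scons x env)) phi).

Definition transitive_set (u : V) : Prop :=
  forall x y, mem x u -> mem y x -> mem y u.

Definition countable_set (u : V) : Prop :=
  exists f : V -> nat, forall x y, mem x u -> mem y u -> f x = f y -> x = y.

Definition is_pair (z a b : V) : Prop :=
  forall w, mem w z <->
    ((forall y, mem y w <-> y = a) \/ (forall y, mem y w <-> (y = a \/ y = b))).

Definition pair_in (a b t : V) : Prop := exists z, mem z t /\ is_pair z a b.

Section Poset.
Variables (Pset leP zeroP : V).

Definition leq (p q : V) : Prop := pair_in p q leP.

Definition partial_order_with_least : Prop :=
  (forall z, mem z leP -> exists p q, mem p Pset /\ mem q Pset /\ is_pair z p q) /\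
  (forall p, mem p Pset -> leq p p) /\
  (forall p q, mem p Pset -> mem q Pset -> leq p q -> leq q p -> p = q) /\
  (forall p q r, mem p Pset -> mem q Pset -> mem r Pset ->
     leq p q -> leq q r -> leq p r) /\
  mem zeroP Pset /\ (forall p, mem p Pset -> leq zeroP p).

Definition ideal (I : V) : Prop :=
  (forall p, mem p I -> mem p Pset) /\
  (forall p q, mem q Pset -> mem p I -> leq q p -> mem q I) /\
  (forall p q, mem p I -> mem q I ->
     exists r, mem r I /\ leq p r /\ leq q r).

Inductive is_name : V -> Prop :=
  | name_intro : forall tau,
      (forall z, mem z tau -> exists sigma p,
          is_name sigma /\ mem p Pset /\ is_pair z sigma p) ->
      is_name tau.

Definition uname (u x : V) : Prop := mem x u /\ is_name x.

Definition is_val (I : V) (val : V -> V) : Prop :=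
  forall tau, is_name tau -> forall x,
    mem x (val tau) <-> exists sigma q, mem q I /\ pair_in sigma q tau /\ x = val sigma.

(* states are elements of I; accessibility is <=^P restricted to I *)
Definition mdia (I : V) (psi : V -> Prop) (s : V) : Prop :=
  exists t, mem t I /\ leq s t /\ psi t.
Definition mbox (I : V) (psi : V -> Prop) (s : V) : Prop :=
  forall t, mem t I -> leq s t -> psi t.
Definition mvalid (I : V) (psi : V -> Prop) : Prop :=
  forall s, mem s I -> psi s.

Definition star_mem (u x y s : V) : Prop :=
  uname u x /\ uname u y /\ exists s', leq s' s /\ pair_in x s' y.

Definition tilde_mem (u I sigma tau : V) : Prop :=
  uname u sigma /\ uname u tau /\
  mvalid I (mdia I (mbox I (star_mem u sigma tau))).

Definition is_mos (u I : V) (mos : V -> V) : Prop :=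
  forall tau, uname u tau -> forall x,
    mem x (mos tau) <-> exists sigma, tilde_mem u I sigma tau /\ x = mos sigma.

End Poset.
End SetTheory.

(* Modally, [sigma ~∈ tau] says that from every state of the ideal one can
   move to a state after which [sigma ∈* tau] holds forever.  Since [I] is
   non-empty and directed and [∈*] is upward persistent along [<=^P], this
   happens exactly when [<sigma, q> ∈ tau] for some [q ∈ I], which is the
   clause defining [val_I].  Hence [~∈] is contained in the transitive closure
   of [∈] (so it is well-founded), and the recursion equations of the collapse
   and of [val_I] coincide on [u^P]; well-founded induction along [∈] then
   identifies any collapse with any valuation. *)

From Stdlib Require Import Relations Wellfounded ProofIrrelevance
  FunctionalExtensionality ClassicalEpsilon.

Set Implicit Arguments.

Section Pairs.
Variables (V : Type) (mem : V -> V -> Prop).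
Hypothesis HV : ZF_universe mem.

Lemma singleton_exists (a : V) : exists w, forall y, mem y w <-> y = a.
Proof.
  destruct (zf_pair HV a a) as [w Hw].
  exists w; intro y; rewrite Hw; tauto.
Qed.

Lemma is_pair_singleton_mem (z a b : V) :
  is_pair mem z a b -> exists w, mem w z /\ mem a w.
Proof.
  intros Hz; destruct (singleton_exists a) as [w Hw].
  exists w; split.
  - apply Hz; left; exact Hw.
  - apply Hw; reflexivity.
Qed.

Lemma is_pair_inj_fst (z a b c d : V) :
  is_pair mem z a b -> is_pair mem z c d -> a = c.
Proof.
  intros Hab Hcd; destruct (singleton_exists a) as [w Hw].
  assert (Hwz : mem w z) by (apply Hab; left; exact Hw).
  apply Hcd in Hwz as [Hc | Hcd'].
  - symmetry; apply Hw, Hc; reflexivity.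
  - symmetry; apply Hw, Hcd'; left; reflexivity.
Qed.

Lemma is_pair_snd_cases (z a b d : V) :
  is_pair mem z a b -> is_pair mem z a d -> b = a \/ b = d.
Proof.
  intros Hab Had; destruct (zf_pair HV a b) as [w Hw].
  assert (Hwz : mem w z) by (apply Hab; right; exact Hw).
  assert (Hbw : mem b w) by (apply Hw; right; reflexivity).
  apply Had in Hwz as [Ha | Had'].
  - left; apply Ha, Hbw.
  - apply Had', Hbw.
Qed.

Lemma is_pair_inj (z a b c d : V) :
  is_pair mem z a b -> is_pair mem z c d -> a = c /\ b = d.
Proof.
  intros Hab Hcd.
  assert (Eac : a = c) by exact (is_pair_inj_fst Hab Hcd).
  subst c; split; [reflexivity |].
  destruct (is_pair_snd_cases Hab Hcd), (is_pair_snd_cases Hcd Hab); congruence.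
Qed.

Lemma pair_in_clos_trans (s q x : V) : pair_in mem s q x -> clos_trans V mem s x.
Proof.
  intros [z [Hzx Hz]]; destruct (is_pair_singleton_mem Hz) as [w [Hwz Hsw]].
  apply t_trans with w; [apply t_step, Hsw |].
  apply t_trans with z; apply t_step; assumption.
Qed.

Lemma wf_clos_trans_mem : well_founded (clos_trans V mem).
Proof. exact (wf_clos_trans V mem (zf_found HV)). Qed.

End Pairs.

Section Valuation.
Variables (V : Type) (mem : V -> V -> Prop).
Hypothesis HV : ZF_universe mem.
Variable I : V.

Let Rt := clos_trans V mem.

(* The first components of pairs in [x] lie in [⋃⋃x], so Replacement on
   [⋃⋃x] collects the recursive values. *)
Lemma val_step_exists (x : V) (rec : forall y, Rt y x -> V) :
  exists b, forall y, mem y b <->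
    exists s q (h : Rt s x), mem q I /\ pair_in mem s q x /\ y = rec s h.
Proof.
  destruct (zf_union HV x) as [a1 Ha1]; destruct (zf_union HV a1) as [a Ha].
  destruct (zf_repl HV (fun s y => exists q (h : Rt s x),
              mem q I /\ pair_in mem s q x /\ y = rec s h) a) as [b Hb].
  - intros s y y' _ [q [h [_ [_ E]]]] [q' [h' [_ [_ E']]]]; subst.
    f_equal; apply proof_irrelevance.
  - exists b; intro y; rewrite Hb; split.
    + intros [s [_ Hs]]; exists s; exact Hs.
    + intros [s Hs]; exists s; split; [| exact Hs].
      destruct Hs as [q [h [_ [[z [Hzx Hz]] _]]]].
      destruct (is_pair_singleton_mem HV Hz) as [w [Hwz Hsw]].
      apply Ha; exists w; split; [apply Ha1; exists z; auto | exact Hsw].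
Qed.

Definition val_step (x : V) (rec : forall y, Rt y x -> V) : V :=
  proj1_sig (constructive_indefinite_description _ (val_step_exists rec)).

Definition val : V -> V := Fix (wf_clos_trans_mem HV) (fun _ => V) val_step.

Lemma val_unfold (x : V) : val x = @val_step x (fun y _ => val y).
Proof.
  unfold val; apply (Fix_eq (wf_clos_trans_mem HV) (fun _ => V) val_step).
  intros y f g Hfg.
  replace g with f; [reflexivity |].
  apply functional_extensionality_dep; intro z.
  apply functional_extensionality_dep; auto.
Qed.

Lemma mem_val (x y : V) :
  mem y (val x) <-> exists s q, mem q I /\ pair_in mem s q x /\ y = val s.
Proof.
  rewrite val_unfold; unfold val_step.
  destruct (constructive_indefinite_description _ _) as [b Hb]; simpl.
  rewrite Hb; split.
  - intros [s [q [_ Hs]]]; exists s, q; exact Hs.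
  - intros [s [q [Hq [Hp E]]]]; exists s, q, (pair_in_clos_trans HV Hp); auto.
Qed.

Lemma val_is_val (Pset : V) : is_val mem Pset I val.
Proof. intros tau _ x; apply mem_val. Qed.

End Valuation.

Section DevelopmentModel.
Variables (V : Type) (mem : V -> V -> Prop).
Hypothesis HV : ZF_universe mem.
Variables (u Pset leP I : V).
Hypothesis Htr : transitive_set mem u.
Hypothesis Hle_field : forall z, mem z leP ->
  exists p q, mem p Pset /\ mem q Pset /\ is_pair mem z p q.
Hypothesis Hle_refl : forall p, mem p Pset -> leq mem leP p p.
Hypothesis Hle_trans : forall p q r, mem p Pset -> mem q Pset -> mem r Pset ->
  leq mem leP p q -> leq mem leP q r -> leq mem leP p r.
Hypothesis HI : ideal mem Pset leP I.
Hypothesis HIne : exists p, mem p I.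

Lemma leq_in_Pset (p q : V) : leq mem leP p q -> mem p Pset /\ mem q Pset.
Proof.
  intros [z [Hz Hpq]]; destruct (Hle_field Hz) as [p' [q' [Hp' [Hq' Hz']]]].
  destruct (is_pair_inj HV Hpq Hz'); subst; auto.
Qed.

Lemma uname_pair_in (sigma q tau : V) :
  uname mem Pset u tau -> pair_in mem sigma q tau -> uname mem Pset u sigma.
Proof.
  intros [Htu Htn] [z [Hzt Hz]]; split.
  - destruct (is_pair_singleton_mem HV Hz) as [w [Hwz Hsw]].
    exact (Htr (Htr (Htr Htu Hzt) Hwz) Hsw).
  - destruct Htn as [tau Ht].
    destruct (Ht z Hzt) as [s' [p [Hs' [_ Hz']]]].
    destruct (is_pair_inj HV Hz Hz'); subst; exact Hs'.
Qed.

(* Forward: evaluate at some state [s0 ∈ I], and read the box at the reached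
   state itself.  Backward: from any [s], move to a common upper bound of [s]
   and [q] in [I]; from there on, [q] witnesses [sigma ∈* tau]. *)
Lemma tilde_memE (sigma tau : V) :
  tilde_mem mem Pset leP u I sigma tau <->
  uname mem Pset u sigma /\ uname mem Pset u tau /\
  exists q, mem q I /\ pair_in mem sigma q tau.
Proof.
  destruct HI as [HIP [HIdown HIdir]]; split.
  - intros [Hs [Ht Hvalid]]; do 2 (split; [assumption |]).
    destruct HIne as [s0 Hs0].
    destruct (Hvalid s0 Hs0) as [t [HtI [_ Hbox]]].
    destruct (Hbox t HtI (Hle_refl (HIP t HtI))) as [_ [_ [q [Hqt Hp]]]].
    exists q; split; [| exact Hp].
    apply (HIdown t q); [apply (leq_in_Pset Hqt) | exact HtI | exact Hqt].
  - intros [Hs [Ht [q [HqI Hp]]]]; do 2 (split; [assumption |]).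
    intros s HsI; destruct (HIdir s q HsI HqI) as [r [HrI [Hsr Hqr]]].
    exists r; do 2 (split; [assumption |]).
    intros t HtI Hrt; do 2 (split; [assumption |]).
    exists q; split; [| exact Hp].
    apply (Hle_trans (HIP q HqI) (HIP r HrI) (HIP t HtI)); assumption.
Qed.

Lemma tilde_mem_clos_trans (sigma tau : V) :
  tilde_mem mem Pset leP u I sigma tau -> clos_trans V mem sigma tau.
Proof.
  intros H; apply tilde_memE in H as [_ [_ [q [_ Hp]]]].
  exact (pair_in_clos_trans HV Hp).
Qed.

Lemma wf_tilde_mem : well_founded (tilde_mem mem Pset leP u I).
Proof.
  apply (wf_incl V _ (clos_trans V mem)); [exact tilde_mem_clos_trans |].
  exact (wf_clos_trans_mem HV).
Qed.

Lemma val_is_mos : is_mos mem Pset leP u I (val HV I).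
Proof.
  intros tau Htau x; rewrite mem_val; split.
  - intros [s [q [Hq [Hp E]]]]; exists s; split; [| exact E].
    apply tilde_memE; split; [exact (uname_pair_in Htau Hp) |].
    split; [exact Htau | exists q; auto].
  - intros [s [Hs E]]; apply tilde_memE in Hs as [_ [_ [q [Hq Hp]]]].
    exists s, q; auto.
Qed.

Lemma mos_eq_val (mos valI : V -> V) :
  is_mos mem Pset leP u I mos -> is_val mem Pset I valI ->
  forall tau, uname mem Pset u tau -> mos tau = valI tau.
Proof.
  intros Hmos Hval tau.
  induction tau as [tau IH] using (well_founded_ind (wf_clos_trans_mem HV)).
  intros Htau; apply (zf_ext HV); intro x.
  rewrite (Hmos tau Htau x), (Hval tau (proj2 Htau) x); split.
  - intros [s [Hs E]]; pose proof (tilde_mem_clos_trans Hs) as Hst.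
    apply tilde_memE in Hs as [Hsu [_ [q [Hq Hp]]]].
    exists s, q; rewrite E; auto.
  - intros [s [q [Hq [Hp E]]]]; pose proof (uname_pair_in Htau Hp) as Hsu.
    exists s; split.
    + apply tilde_memE; split; [exact Hsu | split; [exact Htau | exists q; auto]].
    + rewrite E; symmetry; apply IH; [exact (pair_in_clos_trans HV Hp) | exact Hsu].
Qed.

End DevelopmentModel.

Theorem mainTheorem5 (V : Type) (mem : V -> V -> Prop)
  (HV : ZF_universe mem)
  (u : V) (Hctm : countable_set mem u) (Htr : transitive_set mem u)
  (Hzf : ZFminus_model mem u)
  (Pset leP zeroP : V) (HPu : mem Pset u) (Hleu : mem leP u)
  (HPo : partial_order_with_least mem Pset leP zeroP)
  (I : V) (HI : ideal mem Pset leP I) (HIne : exists p, mem p I) :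
  well_founded (tilde_mem mem Pset leP u I) /\
  (exists mos, is_mos mem Pset leP u I mos) /\
  (exists val, is_val mem Pset I val) /\
  (forall mos val, is_mos mem Pset leP u I mos -> is_val mem Pset I val ->
     (forall tau, uname mem Pset u tau -> mos tau = val tau) /\
     (forall x, (exists tau, uname mem Pset u tau /\ x = mos tau) <->
                (exists sigma, uname mem Pset u sigma /\ x = val sigma))).
Proof.
  destruct HPo as [Hfield [Hrefl [_ [Htrans _]]]].
  split; [exact (wf_tilde_mem HV u Hfield Hrefl Htrans HI HIne) |].
  split; [exists (val HV I); exact (val_is_mos HV Htr Hfield Hrefl Htrans HI HIne) |].
  split; [exists (val HV I); apply val_is_val |].
  intros mos valI Hmos Hval.
  pose proof (mos_eq_val HV Htr Hfield Hrefl Htrans HI HIne Hmos Hval) as Heq.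
  split; [exact Heq |].
  intro x; split; intros [t [Ht E]]; exists t; split; auto;
    rewrite E; [| symmetry]; auto.
Qed.
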